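(* Let $\mathbb{F}$ be a clone on a set $A$ and let $\mathbb{S}\subseteq\mathbb{F}^{(1)}$ be a transformation semigroup (closed under composition). If $\operatorname{cf}(\mathbb{S})>\aleph_0$ and $\operatorname{rank}(\mathbb{F}:\mathbb{S})$ is finite, then $\operatorname{cf}(\mathbb{F})>\aleph_0$.
   Context: A clone on $A$ is a set of finitary operations on $A$ containing all projections and closed under composition $f\circ\langle g_1,\dots,g_n\rangle(\bar x)=f(g_1(\bar x),\dots,g_n(\bar x))$; $\mathbb{F}^{(n)}$ denotes the $n$-ary members of $\mathbb{F}$; $\langle M\rangle_{O_A}$ is the clone generated by $M$. $\operatorname{rank}(\mathbb{F}:M)$ is the least cardinality of $N\subseteq\mathbb{F}$ with $\langle M\cup N\rangle_{O_A}=\mathbb{F}$. The cofinality $\operatorname{cf}$ of a non-finitely generated algebraic structure (clone, semigroup) is the least cardinal $\lambda$ such that it is the union of an increasing chain $(\mathbb{A}_i)_{i<\lambda}$ of proper substructures (subclones, resp. subsemigroups). *)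

From mathcomp Require Import all_boot.
Set Implicit Arguments. Unset Strict Implicit. Unset Printing Implicit Defensive.

Definition op (A : Type) : Type := {n : nat & ('I_n -> A) -> A}.

Definition mkop (A : Type) (n : nat) (f : ('I_n -> A) -> A) : op A := existT _ n f.

Definition proj_op (A : Type) (n : nat) (i : 'I_n) : op A := mkop (fun x => x i).

Definition comp_op (A : Type) (n m : nat) (f : ('I_n -> A) -> A)
  (g : 'I_n -> ('I_m -> A) -> A) : op A := mkop (fun x => f (fun i => g i x)).

Definition is_clone (A : Type) (C : op A -> Prop) : Prop :=
  (forall n (i : 'I_n), C (proj_op A i)) /\
  (forall n m (f : ('I_n -> A) -> A) (g : 'I_n -> ('I_m -> A) -> A),
      C (mkop f) -> (forall i, C (mkop (g i))) -> C (comp_op f g)).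

Definition gen_clone (A : Type) (M : op A -> Prop) : op A -> Prop :=
  fun f => forall C, is_clone C -> (forall g, M g -> C g) -> C f.

Definition unary_op (A : Type) (s : A -> A) : op A := mkop (fun x : 'I_1 -> A => s (x ord0)).

Definition is_semigroup (A : Type) (S : (A -> A) -> Prop) : Prop :=
  forall s t, S s -> S t -> S (s \o t).

Definition finite_rank (A : Type) (F : op A -> Prop) (S : (A -> A) -> Prop) : Prop :=
  exists (k : nat) (N : 'I_k -> op A),
    (forall i, F (N i)) /\
    (forall f, gen_clone (fun g => (exists s, S s /\ g = unary_op s) \/ (exists i, g = N i)) f
               <-> F f).

(* cf(F) > aleph_0 for a clone F: F is not the union of an increasing
   omega-chain of proper subclones. *)
Definition clone_cf_uncountable (A : Type) (F : op A -> Prop) : Prop :=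
  ~ exists Fk : nat -> op A -> Prop,
      (forall k, is_clone (Fk k)) /\
      (forall k f, Fk k f -> F f) /\
      (forall k, exists f, F f /\ ~ Fk k f) /\
      (forall k f, Fk k f -> Fk k.+1 f) /\
      (forall f, F f -> exists k, Fk k f).

(* cf(S) > aleph_0 for a semigroup S: S is not the union of an increasing
   omega-chain of proper subsemigroups. *)
Definition sg_cf_uncountable (A : Type) (S : (A -> A) -> Prop) : Prop :=
  ~ exists Sk : nat -> (A -> A) -> Prop,
      (forall k, is_semigroup (Sk k)) /\
      (forall k s, Sk k s -> S s) /\
      (forall k, exists s, S s /\ ~ Sk k s) /\
      (forall k s, Sk k s -> Sk k.+1 s) /\
      (forall s, S s -> exists k, Sk k s).

From mathcomp Require Import all_boot.
From Stdlib Require Import Classical.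

Set Implicit Arguments.
Unset Strict Implicit.
Unset Printing Implicit Defensive.

(* Suppose F = U_k F_k for an
   increasing chain of proper subclones.  The finitely many extra generators
   N_0, ..., N_(k-1) of F over S all lie in one stage F_K.  The traces
   S_n := {s in S | s in F_(n+K)} are subsemigroups of S (a clone is closed
   under composing unary operations), they increase and exhaust S.  If some
   S_n were all of S, then F_(n+K) would contain S together with every N_i,
   hence the whole clone <S u N> = F, contradicting properness.  So the S_n
   form a countable chain of proper subsemigroups exhausting S, i.e.
   cf(S) = aleph_0, against the hypothesis. *)

Lemma chain_mono (T : Type) (P : nat -> T -> Prop) :
  (forall k x, P k x -> P k.+1 x) -> forall i j x, i <= j -> P i x -> P j x.
Proof.
move=> inc i j x; elim: j => [|j IH]; first by rewrite leqn0 => /eqP ->.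
rewrite leq_eqVlt => /orP [/eqP -> //|]; rewrite ltnS => le_ij Pix.
exact/inc/IH.
Qed.

Lemma chain_absorbs_finite (T : Type) (P : nat -> T -> Prop) (k : nat)
    (x : 'I_k -> T) :
  (forall n y, P n y -> P n.+1 y) -> (forall i, exists n, P n (x i)) ->
  exists K, forall i, P K (x i).
Proof.
move=> inc cover; have mono := chain_mono inc.
have below : forall m, exists K, forall i : 'I_k, i < m -> P K (x i).
  elim=> [|m [K HK]]; first by exists 0.
  have [lt_mk | le_km] := ltnP m k; last first.
    by exists K => i _; apply: HK; apply: leq_trans (ltn_ord i) le_km.
  have [j Hj] := cover (Ordinal lt_mk).
  exists (maxn K j) => i; rewrite ltnS leq_eqVlt => /orP [/eqP im | lt_im].
    have -> : i = Ordinal lt_mk by apply: val_inj.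
    by apply: mono Hj; rewrite leq_maxr.
  by apply: mono (HK i lt_im); rewrite leq_maxl.
have [K HK] := below k.
by exists K => i; apply: HK.
Qed.

Lemma clone_unary_comp (A : Type) (C : op A -> Prop) (s t : A -> A) :
  is_clone C -> C (unary_op s) -> C (unary_op t) -> C (unary_op (s \o t)).
Proof.
move=> [_ comp] Cs Ct.
exact: (comp 1 1 (fun y => s (y ord0)) (fun _ x => t (x ord0)) Cs (fun _ => Ct)).
Qed.

Lemma clone_trace_semigroup (A : Type) (C : op A -> Prop) (S : (A -> A) -> Prop) :
  is_clone C -> is_semigroup S ->
  is_semigroup (fun s => S s /\ C (unary_op s)).
Proof.
move=> clC sgS s t [Ss Cs] [St Ct]; split; first exact: sgS.
exact: clone_unary_comp.
Qed.

Lemma clone_contains_generated (A : Type) (F C : op A -> Prop)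
    (S : (A -> A) -> Prop) (k : nat) (N : 'I_k -> op A) :
  (forall f, gen_clone (fun g => (exists s, S s /\ g = unary_op s)
                                 \/ (exists i, g = N i)) f <-> F f) ->
  is_clone C -> (forall s, S s -> C (unary_op s)) -> (forall i, C (N i)) ->
  forall f, F f -> C f.
Proof.
move=> genF clC CS CN f /genF; apply => // g [[s [Ss ->]] | [i ->]]; auto.
Qed.

Theorem proposition6p1 (A : Type) (F : op A -> Prop) (S : (A -> A) -> Prop) :
  is_clone F ->
  is_semigroup S ->
  (forall s, S s -> F (unary_op s)) ->
  sg_cf_uncountable S ->
  finite_rank F S ->
  clone_cf_uncountable F.
Proof.
move=> _ sgS SF cfS [k [N [FN genF]]] [Fk [clFk [_ [proper [inc cover]]]]].
have mono := chain_mono inc.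
have [K FKN] : exists K, forall i, Fk K (N i).
  by apply: chain_absorbs_finite => // i; apply/cover/FN.
apply: cfS; exists (fun n s => S s /\ Fk (n + K) (unary_op s)).
split; [|split; [|split; [|split]]].
- by move=> n; apply: clone_trace_semigroup.
- by move=> n s [].
- move=> n; apply: NNPP => no_missing.
  have FkS : forall s, S s -> Fk (n + K) (unary_op s).
    by move=> s Ss; apply: NNPP => Fns; apply: no_missing; exists s; split => // [[]].
  have [f [Ff notFkf]] := proper (n + K); apply/notFkf.
  apply: (clone_contains_generated genF (clFk (n + K)) FkS _ Ff) => i.
  by apply: mono (FKN i); rewrite leq_addl.
- by move=> n s [Ss Fs]; split => //; apply: inc.
- move=> s Ss; have [j Fjs] := cover _ (SF _ Ss).
  by exists (j - K); split => //; apply: mono Fjs; rewrite addnC -leq_subLR.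
Qed.
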